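(* Let $(X,\sim)$, $U$ and $\tau$ satisfy (C1), (C1'), (C2), and let $\mathcal M(U,\tau)=(X,(U_x)_{x\in X})$ be as constructed below. Then $\mathcal M(U,\tau)$ always satisfies (LM0), (LM1), (LM1'), and the following are equivalent: (i) $\mathcal M(U,\tau)$ is a local Moufang set; (ii) $h_x^{-1}Uh_x=U$ for all units $x\in X$; (iii) $U^\tau=U^{\mu_x}$ for all units $x\in X$.
   Context: Group actions are right actions; $g^h=h^{-1}gh$; permutations are composed left to right. For a set $X$ with equivalence relation $\sim$, $\overline x$ is the class of $x$, $\overline X$ the set of classes, $\mathrm{Sym}(X,\sim)$ the group of bijections $g$ with $x\sim y\iff xg\sim yg$, and for $U\le\mathrm{Sym}(X,\sim)$, $\overline U$ is the induced permutation group of $\overline X$. A local Moufang set is $(X,\sim)$ with $|\overline X|>2$ and subgroups $U_x\le\mathrm{Sym}(X,\sim)$ ($x\in X$) with: (LM0) $x\sim y\Rightarrow\overline{U_x}=\overline{U_y}$; (LM1) $U_x$ fixes $x$ and is sharply transitive on $X\setminus\overline x$; (LM1') $\overline{U_x}$ fixes $\overline x$ and is sharply transitive on $\overline X\setminus\{\overline x\}$; (LM2) $U_x^g=U_{xg}$ for all $x$ and all $g\in\langle U_y\mid y\in X\rangle$. Construction data: a set with equivalence relation $(X,\sim)$ with $|\overline X|>2$, a subgroup $U\le\mathrm{Sym}(X,\sim)$ and $\tau\in\mathrm{Sym}(X,\sim)$ such that (C1) $U$ fixes a point, called $\infty$, and acts sharply transitively on $X\setminus\overline\infty$; (C1') $\overline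 U$ acts sharply transitively on $\overline X\setminus\{\overline\infty\}$; (C2) $\infty\tau\not\sim\infty$ and $\infty\tau^2=\infty$; put $0:=\infty\tau$. For $x\not\sim\infty$ let $\alpha_x$ be the unique element of $U$ with $0\alpha_x=x$, $-x:=0\alpha_x^{-1}$, and $\gamma_x:=\alpha_x^\tau$. Define $U_\infty:=U$, $U_0:=U^\tau$, $U_x:=U_0^{\alpha_x}$ for $x\not\sim\infty$ and $U_x:=U_\infty^{\gamma_{x\tau^{-1}}}$ for $x\sim\infty$; this is $\mathcal M(U,\tau)$. A unit is $x$ with $x\not\sim0$, $x\not\sim\infty$. For a unit $x$: $\mu_x:=\gamma_{(-x)\tau^{-1}}\,\alpha_x\,\gamma_{-(x\tau^{-1})}$ and $h_x:=\tau\,\alpha_x\,\tau^{-1}\,\alpha_{-(x\tau^{-1})}\,\tau\,\alpha_{-\left((-(x\tau^{-1}))\tau\right)}$. *)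

From Stdlib Require Import Classical ClassicalEpsilon FunctionalExtensionality.

Set Implicit Arguments.

(* Bijections of X, given with their inverse. Right action: [act x g] = xg. *)
Record perm (X : Type) := Perm {
  pf : X -> X;
  pinv : X -> X;
  pK : forall x, pinv (pf x) = x;
  pKV : forall x, pf (pinv x) = x }.

Definition act {X : Type} (x : X) (g : perm X) : X := pf g x.

Definition pid (X : Type) : perm X :=
  @Perm X (fun x => x) (fun x => x) (fun x => eq_refl) (fun x => eq_refl).

(* product g h : first g then h (permutations composed left to right) *)
Program Definition pmul {X : Type} (g h : perm X) : perm X :=
  @Perm X (fun x => pf h (pf g x)) (fun x => pinv g (pinv h x)) _ _.
Next Obligation. now rewrite pK, pK. Qed.
Next Obligation. now rewrite pKV, pKV. Qed.

Program Definition pinvp {X : Type} (g : perm X) : perm X :=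
  @Perm X (pinv g) (pf g) _ _.
Next Obligation. apply pKV. Qed.
Next Obligation. apply pK. Qed.

Definition pconj {X : Type} (g h : perm X) : perm X := pmul (pmul (pinvp h) g) h.

Definition pset (X : Type) := perm X -> Prop.

Definition pset_eq {X : Type} (A B : pset X) : Prop := forall g, A g <-> B g.

Definition pset_conj {X : Type} (A : pset X) (h : perm X) : pset X :=
  fun g => exists a, A a /\ g = pconj a h.

Definition is_subgroup {X : Type} (A : pset X) : Prop :=
  A (pid X) /\ (forall g h, A g -> A h -> A (pmul g h)) /\
  (forall g, A g -> A (pinvp g)).

Definition in_Sym {X : Type} (sim : X -> X -> Prop) (g : perm X) : Prop :=
  forall x y, sim x y <-> sim (act x g) (act y g).

Definition subgroup_Sym {X : Type} (sim : X -> X -> Prop) (A : pset X) : Prop :=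
  is_subgroup A /\ forall g, A g -> in_Sym sim g.

Definition three_classes {X : Type} (sim : X -> X -> Prop) : Prop :=
  exists a b c : X, ~ sim a b /\ ~ sim a c /\ ~ sim b c.

(* two elements of A induce the same permutation of the classes *)
Definition same_bar {X : Type} (sim : X -> X -> Prop) (g h : perm X) : Prop :=
  forall w, sim (act w g) (act w h).

Definition fix_sharp {X : Type} (sim : X -> X -> Prop) (A : pset X) (x : X) : Prop :=
  (forall g, A g -> act x g = x) /\
  (forall y z, ~ sim y x -> ~ sim z x -> exists g, A g /\ act y g = z) /\
  (forall y g h, ~ sim y x -> A g -> A h -> act y g = act y h -> g = h).

(* the induced group Abar fixes xbar and is sharply transitive on Xbar \ {xbar} *)
Definition fix_sharp_bar {X : Type} (sim : X -> X -> Prop) (A : pset X) (x : X) : Prop :=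
  (forall g, A g -> sim (act x g) x) /\
  (forall y z, ~ sim y x -> ~ sim z x -> exists g, A g /\ sim (act y g) z) /\
  (forall y g h, ~ sim y x -> A g -> A h -> sim (act y g) (act y h) ->
     same_bar sim g h).

Definition bar_eq {X : Type} (sim : X -> X -> Prop) (A B : pset X) : Prop :=
  (forall g, A g -> exists h, B h /\ same_bar sim g h) /\
  (forall h, B h -> exists g, A g /\ same_bar sim g h).

Inductive gen {X : Type} (F : X -> pset X) : pset X :=
  | gen_in : forall y g, F y g -> gen F g
  | gen_id : gen F (pid X)
  | gen_mul : forall g h, gen F g -> gen F h -> gen F (pmul g h)
  | gen_inv : forall g, gen F g -> gen F (pinvp g).

Definition LM0 {X : Type} (sim : X -> X -> Prop) (F : X -> pset X) : Prop :=
  forall x y, sim x y -> bar_eq sim (F x) (F y).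
Definition LM1 {X : Type} (sim : X -> X -> Prop) (F : X -> pset X) : Prop :=
  forall x, fix_sharp sim (F x) x.
Definition LM1' {X : Type} (sim : X -> X -> Prop) (F : X -> pset X) : Prop :=
  forall x, fix_sharp_bar sim (F x) x.
Definition LM2 {X : Type} (F : X -> pset X) : Prop :=
  forall x g, gen F g -> pset_eq (pset_conj (F x) g) (F (act x g)).

Definition local_moufang {X : Type} (sim : X -> X -> Prop) (F : X -> pset X) : Prop :=
  three_classes sim /\ (forall x, subgroup_Sym sim (F x)) /\
  LM0 sim F /\ LM1 sim F /\ LM1' sim F /\ LM2 F.

Section Construction.
Variables (X : Type) (sim : X -> X -> Prop) (U : pset X) (tau : perm X) (inf : X).

Definition zero : X := act inf tau.

(* alpha_x : the unique element of U with 0 alpha_x = x (for x not ~ inf) *)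
Definition alpha (x : X) : perm X :=
  epsilon (inhabits (pid X)) (fun a => U a /\ act zero a = x).

Definition mneg (x : X) : X := act zero (pinvp (alpha x)).

Definition gamma (x : X) : perm X := pconj (alpha x) tau.

Definition tinv (x : X) : X := act x (pinvp tau).

Definition U0 : pset X := pset_conj U tau.

Definition Ux (x : X) : pset X :=
  fun g => (sim x inf /\ pset_conj U (gamma (tinv x)) g) \/
           (~ sim x inf /\ pset_conj U0 (alpha x) g).

Definition is_unit (x : X) : Prop := ~ sim x zero /\ ~ sim x inf.

Definition mu (x : X) : perm X :=
  pmul (pmul (gamma (tinv (mneg x))) (alpha x)) (gamma (mneg (tinv x))).

Definition hh (x : X) : perm X :=
  pmul (pmul (pmul (pmul (pmul tau (alpha x)) (pinvp tau))
       (alpha (mneg (tinv x)))) tau)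
       (alpha (mneg (act (mneg (tinv x)) tau))).

End Construction.

From Stdlib Require Import Classical ClassicalEpsilon FunctionalExtensionality Setoid Morphisms.
Set Implicit Arguments.

(* The root groups of M(U, tau) are conjugates of U or of U_0 = U^tau by elements of U_0 or U,
   so (LM0), (LM1) and (LM1') are inherited from (C1) and (C1') by conjugation.
   Since h_x = tau gamma^-1 mu_x alpha' with gamma in U_0 and alpha' in U, we get
   U^(h_x) = U iff U_0^(mu_x) = U, and mu_(-x) = mu_x^-1 turns this into (iii).
   Under (LM2), mu_x lies in <U_0, U_oo> and maps oo to 0, whence (iii). Conversely, given
   U_0^(mu_x) = U for all units x, the factorisation alpha_x = gamma^-1 mu_x gamma' shows
   that the two descriptions U_0^(alpha_x) and U^(gamma_(x tau^-1)) of U_x agree for units;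
   then U, U_0 and every mu_x permute the root groups, and U, U_0 generate <U_y | y in X>. *)

Section PermutationGroups.
Variable X : Type.
Implicit Types (g h a : perm X) (A B : pset X) (x y : X).

Lemma perm_ext g h : (forall x, act x g = act x h) -> g = h.
Proof.
  destruct g as [f fi K KV], h as [f' fi' K' KV']; unfold act; simpl; intros E.
  assert (f = f') by (apply functional_extensionality; exact E). subst f'.
  assert (fi = fi').
  { apply functional_extensionality; intro y. rewrite <- (KV' y) at 1. now rewrite K. }
  subst fi'. f_equal; apply proof_irrelevance.
Qed.

Lemma act_mul x g h : act x (pmul g h) = act (act x g) h. Proof. reflexivity. Qed.
Lemma act_K x g : act (act x g) (pinvp g) = x. Proof. apply pK. Qed.
Lemma act_KV x g : act (act x (pinvp g)) g = x. Proof. apply pKV. Qed.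
Lemma act_conj x a h : act x (pconj a h) = act (act (act x (pinvp h)) a) h.
Proof. reflexivity. Qed.

Lemma act_inj g x y : act x g = act y g -> x = y.
Proof. intro E. now rewrite <- (act_K x g), <- (act_K y g), E. Qed.

Lemma act_moveR g x y : act x (pinvp g) = y <-> x = act y g.
Proof. split; intro E; [rewrite <- E; symmetry; apply act_KV | rewrite E; apply act_K]. Qed.

Lemma mulVp g : pmul (pinvp g) g = pid X.
Proof. apply perm_ext; intro; apply act_KV. Qed.

Lemma mulpV g : pmul g (pinvp g) = pid X.
Proof. apply perm_ext; intro; apply act_K. Qed.

Lemma invpK g : pinvp (pinvp g) = g.
Proof. now apply perm_ext. Qed.

#[global] Instance pset_eq_equiv : Equivalence (@pset_eq X).
Proof.
  split; intros A; unfold pset_eq; [tauto | intros B E g; now rewrite E |].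
  intros B C E F g. now rewrite E, F.
Qed.

#[global] Instance pset_eq_pointwise :
  subrelation (@pset_eq X) (pointwise_relation (perm X) iff).
Proof. intros A B E g. apply E. Qed.

#[global] Instance pset_conj_proper : Proper (pset_eq ==> eq ==> pset_eq) (@pset_conj X).
Proof.
  intros A B E g _ <- k. split; intros [a [Ha ->]]; exists a; split; auto; now apply E.
Qed.

Lemma conj_mem A a g : A a -> pset_conj A g (pconj a g).
Proof. intro; now exists a. Qed.

Lemma conj_mul A g h : pset_eq (pset_conj (pset_conj A g) h) (pset_conj A (pmul g h)).
Proof.
  intro k; split.
  - intros [b [[a [Ha ->]] ->]]. exists a; split; auto. now apply perm_ext.
  - intros [a [Ha ->]]. exists (pconj a g); split; [now apply conj_mem |]. now apply perm_ext.
Qed.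

Lemma conj_ext A g h : (forall x, act x g = act x h) -> pset_eq (pset_conj A g) (pset_conj A h).
Proof. intro E. now rewrite (perm_ext _ _ E). Qed.

Lemma conj_pid A : pset_eq (pset_conj A (pid X)) A.
Proof.
  intro k; split.
  - intros [a [Ha ->]]. replace (pconj a (pid X)) with a; auto. now apply perm_ext.
  - intro Hk. exists k; split; auto. now apply perm_ext.
Qed.

Lemma conj_invK A g : pset_eq (pset_conj (pset_conj A (pinvp g)) g) A.
Proof. now rewrite conj_mul, mulVp, conj_pid. Qed.

Lemma conj_Kinv A g : pset_eq (pset_conj (pset_conj A g) (pinvp g)) A.
Proof. now rewrite conj_mul, mulpV, conj_pid. Qed.

Lemma conj_moveR A B g : pset_eq (pset_conj A g) B <-> pset_eq A (pset_conj B (pinvp g)).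
Proof.
  split; intro E; [rewrite <- E; symmetry; apply conj_Kinv | rewrite E; apply conj_invK].
Qed.

Lemma conj_normal A g : is_subgroup A -> A g -> pset_eq (pset_conj A g) A.
Proof.
  intros [_ [Hmul Hinv]] Hg k; split.
  - intros [a [Ha ->]]. unfold pconj. auto.
  - intro Hk. exists (pmul (pmul g k) (pinvp g)). split; [auto |].
    apply perm_ext; intro w. unfold act; simpl. now rewrite !pKV.
Qed.

End PermutationGroups.

Section EquivalenceClasses.
Variables (X : Type) (sim : X -> X -> Prop).
Implicit Types (g h a : perm X) (A B : pset X) (x y p : X).

Lemma in_Sym_inv g : in_Sym sim g -> in_Sym sim (pinvp g).
Proof. intros G x y. now rewrite (G (act x (pinvp g)) (act y (pinvp g))), !act_KV. Qed.

Lemma in_Sym_mul g h : in_Sym sim g -> in_Sym sim h -> in_Sym sim (pmul g h).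
Proof. intros G H x y. now rewrite !act_mul, (G x y), (H (act x g) (act y g)). Qed.

Lemma in_Sym_conj a h : in_Sym sim a -> in_Sym sim h -> in_Sym sim (pconj a h).
Proof. intros. unfold pconj. auto using in_Sym_mul, in_Sym_inv. Qed.

Lemma in_Sym_sim_inv g x p : in_Sym sim g -> sim (act x (pinvp g)) p <-> sim x (act p g).
Proof. intros G. now rewrite (G _ p), act_KV. Qed.

Lemma fix_sharp_conj A p g :
  in_Sym sim g -> fix_sharp sim A p -> fix_sharp sim (pset_conj A g) (act p g).
Proof.
  intros G [Hfix [Htr Hreg]]. split; [| split].
  - intros k [a [Ha ->]]. now rewrite act_conj, act_K, Hfix.
  - intros y z Hy Hz. rewrite <- in_Sym_sim_inv in Hy, Hz by exact G.
    destruct (Htr _ _ Hy Hz) as [a [Ha Ea]]. exists (pconj a g); split; [now apply conj_mem |].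
    now rewrite act_conj, Ea, act_KV.
  - intros y k1 k2 Hy [a1 [H1 ->]] [a2 [H2 ->]] E.
    rewrite <- in_Sym_sim_inv in Hy by exact G.
    rewrite !act_conj in E. apply act_inj in E. now rewrite (Hreg _ _ _ Hy H1 H2 E).
Qed.

Lemma fix_sharp_bar_conj A p g :
  in_Sym sim g -> fix_sharp_bar sim A p -> fix_sharp_bar sim (pset_conj A g) (act p g).
Proof.
  intros G [Hfix [Htr Hreg]]. split; [| split].
  - intros k [a [Ha ->]]. rewrite act_conj, act_K. apply (proj1 (G _ _)), Hfix, Ha.
  - intros y z Hy Hz. rewrite <- in_Sym_sim_inv in Hy, Hz by exact G.
    destruct (Htr _ _ Hy Hz) as [a [Ha Ea]]. exists (pconj a g); split; [now apply conj_mem |].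
    rewrite act_conj. apply (proj1 (G _ _)) in Ea. now rewrite act_KV in Ea.
  - intros y k1 k2 Hy [a1 [H1 ->]] [a2 [H2 ->]] E w.
    rewrite <- in_Sym_sim_inv in Hy by exact G.
    rewrite !act_conj in E |- *. apply (proj2 (G _ _)) in E.
    apply (proj1 (G _ _)), (Hreg _ _ _ Hy H1 H2 E).
Qed.

Lemma subgroup_Sym_conj A h :
  in_Sym sim h -> subgroup_Sym sim A -> subgroup_Sym sim (pset_conj A h).
Proof.
  intros Hh [[H1 [Hmul Hinv]] HS]. split; [split; [| split] |].
  - exists (pid X); split; auto. apply perm_ext; intro w. symmetry; apply act_KV.
  - intros g k [a [Ha ->]] [b [Hb ->]]. exists (pmul a b); split; auto.
    apply perm_ext; intro w. now rewrite act_conj, !act_mul, !act_conj, act_K.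
  - intros g [a [Ha ->]]. exists (pinvp a); split; auto. now apply perm_ext.
  - intros g [a [Ha ->]]. auto using in_Sym_conj.
Qed.

#[global] Instance fix_sharp_proper : Proper (pset_eq ==> eq ==> iff) (fix_sharp sim).
Proof.
  enough (H : forall A B p, pset_eq A B -> fix_sharp sim A p -> fix_sharp sim B p).
  { intros A B E p _ <-. split; apply H; [| symmetry]; exact E. }
  intros A B p E [Hfix [Htr Hreg]]. split; [| split].
  - intros g Hg. apply Hfix, E, Hg.
  - intros y z Hy Hz. destruct (Htr y z Hy Hz) as [a [Ha Ea]]. exists a. now rewrite <- E.
  - intros y g h Hy Hg Hh. apply Hreg; auto; now apply E.
Qed.

#[global] Instance fix_sharp_bar_proper : Proper (pset_eq ==> eq ==> iff) (fix_sharp_bar sim).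
Proof.
  enough (H : forall A B p, pset_eq A B -> fix_sharp_bar sim A p -> fix_sharp_bar sim B p).
  { intros A B E p _ <-. split; apply H; [| symmetry]; exact E. }
  intros A B p E [Hfix [Htr Hreg]]. split; [| split].
  - intros g Hg. apply Hfix, E, Hg.
  - intros y z Hy Hz. destruct (Htr y z Hy Hz) as [a [Ha Ea]]. exists a. now rewrite <- E.
  - intros y g h Hy Hg Hh. apply Hreg; auto; now apply E.
Qed.

#[global] Instance subgroup_Sym_proper : Proper (pset_eq ==> iff) (subgroup_Sym sim).
Proof.
  enough (H : forall A B, pset_eq A B -> subgroup_Sym sim A -> subgroup_Sym sim B).
  { intros A B E. split; apply H; [| symmetry]; exact E. }
  intros A B E [[H1 [Hmul Hinv]] HS]. split; [split; [| split] |].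
  - now apply E.
  - intros g h Hg Hh. apply E, Hmul; now apply E.
  - intros g Hg. apply E, Hinv; now apply E.
  - intros g Hg. apply HS, E, Hg.
Qed.

Hypotheses (Hsym : forall x y, sim x y -> sim y x)
  (Htrans : forall x y z, sim x y -> sim y z -> sim x z).

Lemma same_bar_inv g g' :
  in_Sym sim g -> same_bar sim g g' -> same_bar sim (pinvp g) (pinvp g').
Proof.
  intros G S w. apply (proj2 (in_Sym_sim_inv _ _ G)), Hsym.
  specialize (S (act w (pinvp g'))). now rewrite act_KV in S.
Qed.

Lemma same_bar_conj_r a g g' :
  in_Sym sim a -> in_Sym sim g -> same_bar sim g g' -> same_bar sim (pconj a g) (pconj a g').
Proof.
  intros A G S w. rewrite !act_conj. eapply Htrans; [| apply S].
  apply (proj1 (G _ _)), (proj1 (A _ _)), same_bar_inv; assumption.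
Qed.

Lemma same_bar_conj_l a a' h :
  in_Sym sim h -> same_bar sim a a' -> same_bar sim (pconj a h) (pconj a' h).
Proof. intros Hh S w. rewrite !act_conj. apply (proj1 (Hh _ _)), S. Qed.

Lemma bar_eq_conj A g g' :
  (forall a, A a -> in_Sym sim a) -> in_Sym sim g -> in_Sym sim g' -> same_bar sim g g' ->
  bar_eq sim (pset_conj A g) (pset_conj A g').
Proof.
  intros HA G G' S. split.
  - intros k [a [Ha ->]]. exists (pconj a g'); split; [now apply conj_mem |].
    now apply same_bar_conj_r; auto.
  - intros k [a [Ha ->]]. exists (pconj a g); split; [now apply conj_mem |].
    intro w. apply Hsym, same_bar_conj_r; auto.
    intro v. apply Hsym, S.
Qed.

#[global] Instance bar_eq_proper : Proper (pset_eq ==> pset_eq ==> iff) (bar_eq sim).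
Proof.
  enough (H : forall A A' B B', pset_eq A A' -> pset_eq B B' -> bar_eq sim A B -> bar_eq sim A' B').
  { intros A A' EA B B' EB. split; apply H; auto; now symmetry. }
  intros A A' B B' EA EB [H1 H2]. split.
  - intros g Hg. destruct (H1 g (proj2 (EA g) Hg)) as [h [Hh S]]. exists h. now rewrite <- EB.
  - intros h Hh. destruct (H2 h (proj2 (EB h) Hh)) as [g [Hg S]]. exists g. now rewrite <- EA.
Qed.

End EquivalenceClasses.

Section Construction.
Variables (X : Type) (sim : X -> X -> Prop) (U : pset X) (tau : perm X) (inf : X).
Hypotheses (Hrefl : forall x, sim x x)
  (Hsym : forall x y, sim x y -> sim y x)
  (Htrans : forall x y z, sim x y -> sim y z -> sim x z)
  (HU : subgroup_Sym sim U)
  (Htau : in_Sym sim tau)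
  (C1 : fix_sharp sim U inf)
  (C1' : fix_sharp_bar sim U inf)
  (C2a : ~ sim (act inf tau) inf)
  (C2b : act (act inf tau) tau = inf).

Local Notation z0 := (zero tau inf).
Local Notation ti := (tinv tau).
Local Notation al := (alpha U tau inf).
Local Notation ga := (gamma U tau inf).
Local Notation neg := (mneg U tau inf).
Local Notation U_0 := (U0 U tau).
Local Notation M := (Ux sim U tau inf).

Implicit Types (g h u v : perm X) (x y : X).

Lemma z0_nsim_inf : ~ sim z0 inf. Proof. exact C2a. Qed.
Lemma inf_nsim_z0 : ~ sim inf z0. Proof. intro S; apply C2a, Hsym, S. Qed.

Lemma tinvK x : act (ti x) tau = x. Proof. apply act_KV. Qed.
Lemma tinv_inf : ti inf = z0. Proof. apply act_moveR. symmetry. exact C2b. Qed.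

Lemma tau_sim_z0 x : sim (act x tau) z0 <-> sim x inf.
Proof. now rewrite (Htau x inf). Qed.

Lemma tau_sim_inf x : sim (act x tau) inf <-> sim x z0.
Proof. rewrite (Htau x z0). unfold zero. now rewrite C2b. Qed.

Lemma tinv_sim_inf x : sim (ti x) inf <-> sim x z0.
Proof. rewrite <- (tinvK x) at 2. symmetry. apply tau_sim_z0. Qed.

Lemma tinv_sim_z0 x : sim (ti x) z0 <-> sim x inf.
Proof. rewrite <- (tinvK x) at 2. symmetry. apply tau_sim_inf. Qed.

Lemma tinv_nsim_inf x : sim x inf -> ~ sim (ti x) inf.
Proof. rewrite tinv_sim_inf. intros S T. apply inf_nsim_z0. eauto. Qed.

Lemma sim_fixpoint g p x : in_Sym sim g -> act p g = p -> (sim (act x g) p <-> sim x p).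
Proof. intros G E. now rewrite (G x p), E. Qed.

Lemma U_in_Sym u : U u -> in_Sym sim u. Proof. apply HU. Qed.
Lemma U_fix u : U u -> act inf u = inf. Proof. apply C1. Qed.

Lemma U_sim_inf u x : U u -> (sim (act x u) inf <-> sim x inf).
Proof. intro Hu. apply sim_fixpoint; [apply U_in_Sym | apply U_fix]; exact Hu. Qed.

Lemma alpha_spec y : ~ sim y inf -> U (al y) /\ act z0 (al y) = y.
Proof.
  intro Hy. unfold alpha. apply epsilon_spec. destruct C1 as [_ [Htr _]]. exact (Htr z0 y C2a Hy).
Qed.

Lemma alpha_U y : ~ sim y inf -> U (al y). Proof. apply alpha_spec. Qed.
Lemma alpha_z0 y : ~ sim y inf -> act z0 (al y) = y. Proof. apply alpha_spec. Qed.

Lemma alpha_uniq u : U u -> al (act z0 u) = u.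
Proof.
  intros Hu. assert (Hy : ~ sim (act z0 u) inf) by now rewrite U_sim_inf.
  destruct C1 as [_ [_ Hreg]]. apply (Hreg z0); auto using alpha_U. now rewrite alpha_z0.
Qed.

Lemma alpha_mul x u : ~ sim x inf -> U u -> al (act x u) = pmul (al x) u.
Proof.
  intros Hx Hu. rewrite <- (alpha_z0 Hx) at 1. rewrite <- act_mul.
  apply alpha_uniq, HU; auto using alpha_U.
Qed.

Lemma alpha_zero : al z0 = pid X.
Proof. apply (alpha_uniq (proj1 (proj1 HU))). Qed.

Lemma mneg_alpha x : ~ sim x inf -> al (neg x) = pinvp (al x).
Proof. intro Hx. apply alpha_uniq, HU, alpha_U, Hx. Qed.

Lemma mneg_nsim_inf x : ~ sim x inf -> ~ sim (neg x) inf.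
Proof. intro Hx. unfold mneg. rewrite U_sim_inf; [exact C2a | apply HU, alpha_U, Hx]. Qed.

Lemma mneg_mneg x : ~ sim x inf -> neg (neg x) = x.
Proof. intro Hx. unfold mneg at 1. rewrite mneg_alpha by exact Hx. apply alpha_z0, Hx. Qed.

Lemma mneg_sim_z0 x : ~ sim x inf -> (sim (neg x) z0 <-> sim x z0).
Proof.
  intro Hx. unfold mneg. rewrite (U_in_Sym (alpha_U Hx) _ z0), act_KV, alpha_z0 by exact Hx.
  split; auto.
Qed.

Lemma U0_subgroup : subgroup_Sym sim U_0. Proof. now apply subgroup_Sym_conj. Qed.
Lemma U0_fix_sharp : fix_sharp sim U_0 z0. Proof. now apply fix_sharp_conj. Qed.
Lemma U0_fix_sharp_bar : fix_sharp_bar sim U_0 z0. Proof. now apply fix_sharp_bar_conj. Qed.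
Lemma U0_in_Sym v : U_0 v -> in_Sym sim v. Proof. apply U0_subgroup. Qed.
Lemma U0_inv v : U_0 v -> U_0 (pinvp v). Proof. apply U0_subgroup. Qed.
Lemma U0_fix v : U_0 v -> act z0 v = z0. Proof. apply U0_fix_sharp. Qed.

Lemma U0_sim_z0 v x : U_0 v -> (sim (act x v) z0 <-> sim x z0).
Proof. intro Hv. apply sim_fixpoint; [apply U0_in_Sym | apply U0_fix]; exact Hv. Qed.

Lemma gamma_U0 y : ~ sim y inf -> U_0 (ga y).
Proof. intro; apply conj_mem, alpha_U; auto. Qed.

Lemma gamma_inf y : ~ sim y inf -> act inf (ga y) = act y tau.
Proof.
  intro Hy. unfold gamma. rewrite act_conj. change (act inf (pinvp tau)) with (ti inf).
  now rewrite tinv_inf, alpha_z0.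
Qed.

Lemma gamma_uniq v : U_0 v -> ~ sim (act inf v) z0 -> ga (ti (act inf v)) = v.
Proof.
  intros Hv Hp. assert (Hy : ~ sim (ti (act inf v)) inf) by now rewrite tinv_sim_inf.
  destruct U0_fix_sharp as [_ [_ Hreg]].
  apply (Hreg inf); auto using inf_nsim_z0, gamma_U0. now rewrite gamma_inf, tinvK.
Qed.

Lemma gamma_mneg y : ~ sim y inf -> ga (neg y) = pinvp (ga y).
Proof. intro Hy. unfold gamma at 1. rewrite mneg_alpha by exact Hy. now apply perm_ext. Qed.

Lemma gamma_zero : ga z0 = pid X.
Proof. unfold gamma. rewrite alpha_zero. apply perm_ext; intro w. apply act_KV. Qed.

Lemma Ux_alpha x : ~ sim x inf -> pset_eq (M x) (pset_conj U_0 (al x)).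
Proof. intros Hx g. unfold Ux. tauto. Qed.

Lemma Ux_gamma x : sim x inf -> pset_eq (M x) (pset_conj U (ga (ti x))).
Proof. intros Hx g. unfold Ux. tauto. Qed.

Lemma Ux_inf : pset_eq (M inf) U.
Proof. now rewrite Ux_gamma, tinv_inf, gamma_zero, conj_pid by apply Hrefl. Qed.

Lemma Ux_zero : pset_eq (M z0) U_0.
Proof. now rewrite Ux_alpha, alpha_zero, conj_pid by exact C2a. Qed.

Lemma LM1_Ux : LM1 sim M.
Proof.
  intro x. destruct (classic (sim x inf)) as [S | S].
  - rewrite Ux_gamma by exact S. rewrite <- (tinvK x) at 2.
    rewrite <- gamma_inf by now apply tinv_nsim_inf.
    apply fix_sharp_conj; auto using U0_in_Sym, gamma_U0, tinv_nsim_inf.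
  - rewrite Ux_alpha by exact S. rewrite <- (alpha_z0 S) at 2.
    apply fix_sharp_conj; auto using U_in_Sym, alpha_U, U0_fix_sharp.
Qed.

Lemma LM1'_Ux : LM1' sim M.
Proof.
  intro x. destruct (classic (sim x inf)) as [S | S].
  - rewrite Ux_gamma by exact S. rewrite <- (tinvK x) at 2.
    rewrite <- gamma_inf by now apply tinv_nsim_inf.
    apply fix_sharp_bar_conj; auto using U0_in_Sym, gamma_U0, tinv_nsim_inf.
  - rewrite Ux_alpha by exact S. rewrite <- (alpha_z0 S) at 2.
    apply fix_sharp_bar_conj; auto using U_in_Sym, alpha_U, U0_fix_sharp_bar.
Qed.

Lemma Ux_subgroup x : subgroup_Sym sim (M x).
Proof.
  destruct (classic (sim x inf)) as [S | S].
  - rewrite Ux_gamma by exact S.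
    apply subgroup_Sym_conj; auto using U0_in_Sym, gamma_U0, tinv_nsim_inf.
  - rewrite Ux_alpha by exact S.
    apply subgroup_Sym_conj; auto using U_in_Sym, alpha_U, U0_subgroup.
Qed.

Lemma alpha_same_bar x y :
  ~ sim x inf -> ~ sim y inf -> sim x y -> same_bar sim (al x) (al y).
Proof.
  intros Hx Hy S. destruct C1' as [_ [_ Hreg]].
  apply (Hreg z0); auto using alpha_U. now rewrite !alpha_z0.
Qed.

Lemma LM0_Ux : LM0 sim M.
Proof.
  intros x y Sxy. destruct (classic (sim x inf)) as [S | S].
  - assert (Sy : sim y inf) by eauto.
    rewrite (Ux_gamma S), (Ux_gamma Sy).
    apply bar_eq_conj; auto using U_in_Sym, U0_in_Sym, gamma_U0, tinv_nsim_inf.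
    apply same_bar_conj_l; auto.
    apply alpha_same_bar; auto using tinv_nsim_inf.
    apply (proj1 (in_Sym_inv Htau _ _)), Sxy.
  - assert (Sy : ~ sim y inf) by eauto.
    rewrite (Ux_alpha S), (Ux_alpha Sy).
    apply bar_eq_conj; auto using U0_in_Sym, U_in_Sym, alpha_U, alpha_same_bar.
Qed.

Local Notation unitp := (is_unit sim tau inf).
Local Notation mu_ := (mu U tau inf).
Local Notation hh_ := (hh U tau inf).

Lemma unit_mneg c : unitp c -> unitp (neg c).
Proof. intros [H0 Hi]. split; [now rewrite mneg_sim_z0 | now apply mneg_nsim_inf]. Qed.

Lemma unit_tinv_nsim_inf c : unitp c -> ~ sim (ti c) inf.
Proof. intros [H0 _]. now rewrite tinv_sim_inf. Qed.

Lemma unit_tinv_mneg_nsim_inf c : unitp c -> ~ sim (ti (neg c)) inf.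
Proof. intro Hc. apply unit_tinv_nsim_inf, unit_mneg, Hc. Qed.

Lemma unit_mneg_tinv_nsim_inf c : unitp c -> ~ sim (neg (ti c)) inf.
Proof. intro Hc. apply mneg_nsim_inf, unit_tinv_nsim_inf, Hc. Qed.

Lemma unit_exists : three_classes sim -> exists c, unitp c.
Proof.
  intros [a [b [c [Hab [Hac Hbc]]]]].
  assert (K : forall p, unitp p \/ sim p z0 \/ sim p inf).
  { intro p. destruct (classic (sim p z0)); auto. destruct (classic (sim p inf)); auto.
    left; now split. }
  destruct (K a) as [? | [? | ?]]; [eauto | |];
  (destruct (K b) as [? | [? | ?]]; [eauto | |]);
  (destruct (K c) as [? | [? | ?]]; [eauto | |]); exfalso; eauto.
Qed.

Lemma mu_in_Sym c : unitp c -> in_Sym sim (mu_ c).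
Proof.
  intro Hc. pose proof (proj2 Hc). unfold mu. apply in_Sym_mul; [apply in_Sym_mul |];
  auto using U0_in_Sym, gamma_U0, U_in_Sym, alpha_U,
    unit_tinv_mneg_nsim_inf, unit_mneg_tinv_nsim_inf.
Qed.

Lemma mu_inf c : unitp c -> act inf (mu_ c) = z0.
Proof.
  intro Hc. unfold mu. rewrite !act_mul, gamma_inf, tinvK by now apply unit_tinv_mneg_nsim_inf.
  unfold mneg at 1. rewrite act_KV. apply U0_fix, gamma_U0, unit_mneg_tinv_nsim_inf, Hc.
Qed.

Lemma mu_z0 c : unitp c -> act z0 (mu_ c) = inf.
Proof.
  intro Hc. pose proof (unit_tinv_nsim_inf Hc) as Hb.
  unfold mu. rewrite !act_mul, U0_fix by now apply gamma_U0, unit_tinv_mneg_nsim_inf.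
  rewrite alpha_z0 by apply Hc. rewrite gamma_mneg by exact Hb.
  apply act_moveR. now rewrite gamma_inf, tinvK.
Qed.

Lemma mu_inv_z0 c : unitp c -> act z0 (pinvp (mu_ c)) = inf.
Proof. intro Hc. apply act_moveR. now rewrite mu_inf. Qed.

Lemma mu_inv_inf c : unitp c -> act inf (pinvp (mu_ c)) = z0.
Proof. intro Hc. apply act_moveR. now rewrite mu_z0. Qed.

Lemma mu_mneg c : unitp c -> mu_ (neg c) = pinvp (mu_ c).
Proof.
  intro Hc. unfold mu. rewrite (mneg_mneg (proj2 Hc)), (mneg_alpha (proj2 Hc)).
  rewrite (gamma_mneg (unit_tinv_mneg_nsim_inf Hc)), (gamma_mneg (unit_tinv_nsim_inf Hc)).
  now apply perm_ext.
Qed.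

Lemma alpha_mu c : unitp c -> al c = pmul (pmul (pinvp (ga (ti (neg c)))) (mu_ c)) (ga (ti c)).
Proof.
  intro Hc. apply perm_ext; intro w. unfold mu.
  rewrite (gamma_mneg (unit_tinv_nsim_inf Hc)), !act_mul, !act_KV. reflexivity.
Qed.

Lemma hh_mu c : hh_ c =
  pmul (pmul (pmul tau (pinvp (ga (ti (neg c))))) (mu_ c)) (al (neg (act (neg (ti c)) tau))).
Proof. apply perm_ext; intro w. unfold hh, mu. now rewrite !act_mul, act_KV. Qed.

Lemma hh_last_U c : unitp c -> U (al (neg (act (neg (ti c)) tau))).
Proof.
  intro Hc. apply alpha_U, mneg_nsim_inf.
  rewrite tau_sim_inf, mneg_sim_z0, tinv_sim_z0 by now apply unit_tinv_nsim_inf.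
  apply Hc.
Qed.

(* The factor [tau gamma^-1] of [h_c] contributes just [U^tau = U_0], as [gamma] lies in [U_0]. *)
Lemma conj_hh c : unitp c -> pset_eq (pset_conj U (hh_ c))
  (pset_conj (pset_conj U_0 (mu_ c)) (al (neg (act (neg (ti c)) tau)))).
Proof.
  intro Hc. rewrite hh_mu, <- !conj_mul. do 2 f_equiv. fold (U0 U tau).
  apply conj_normal; [apply U0_subgroup | apply U0_inv, gamma_U0, unit_tinv_mneg_nsim_inf, Hc].
Qed.

Definition mu_conj_U0 : Prop := forall c, unitp c -> pset_eq (pset_conj U_0 (mu_ c)) U.

Lemma hh_normalizes_iff c :
  unitp c -> pset_eq (pset_conj U (hh_ c)) U <-> pset_eq (pset_conj U_0 (mu_ c)) U.
Proof.
  intro Hc. rewrite conj_hh by exact Hc. pose proof (hh_last_U Hc) as Ha. split; intro E.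
  - apply conj_moveR in E. rewrite E. apply conj_normal; [apply HU | apply HU, Ha].
  - rewrite E. apply conj_normal; [apply HU | exact Ha].
Qed.

Lemma hh_normalizes_all_iff :
  (forall x, unitp x -> pset_eq (pset_conj U (hh_ x)) U) <-> mu_conj_U0.
Proof. split; intros H x Hx; apply (hh_normalizes_iff Hx), H, Hx. Qed.

Lemma U0_conj_mu_iff :
  (forall x, unitp x -> pset_eq U_0 (pset_conj U (mu_ x))) <-> mu_conj_U0.
Proof.
  split; intros H x Hx.
  - apply conj_moveR. rewrite <- mu_mneg by exact Hx. apply H, unit_mneg, Hx.
  - rewrite <- (invpK (mu_ x)). apply (proj1 (conj_moveR U_0 U _)). rewrite <- mu_mneg by exact Hx.
    apply H, unit_mneg, Hx.
Qed.

Definition maps_root_group g x : Prop := pset_eq (pset_conj (M x) g) (M (act x g)).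

Lemma maps_root_group_mul g h x :
  maps_root_group g x -> maps_root_group h (act x g) -> maps_root_group (pmul g h) x.
Proof. unfold maps_root_group. intros E F. now rewrite <- conj_mul, E. Qed.

Lemma maps_root_group_inv g x : maps_root_group g (act x (pinvp g)) -> maps_root_group (pinvp g) x.
Proof.
  unfold maps_root_group. rewrite act_KV. intro E. symmetry. now apply conj_moveR.
Qed.

Definition normalizes_root_groups g : Prop := forall x, maps_root_group g x.

Lemma normalizes_root_groups_mul g h :
  normalizes_root_groups g -> normalizes_root_groups h -> normalizes_root_groups (pmul g h).
Proof. intros G H x. now apply maps_root_group_mul. Qed.

Lemma normalizes_root_groups_inv g :
  normalizes_root_groups g -> normalizes_root_groups (pinvp g).
Proof. intros G x. now apply maps_root_group_inv. Qed.

Lemma normalizes_root_groups_conj a h :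
  normalizes_root_groups a -> normalizes_root_groups h -> normalizes_root_groups (pconj a h).
Proof.
  intros. unfold pconj. auto using normalizes_root_groups_mul, normalizes_root_groups_inv.
Qed.

Lemma maps_root_group_U u x : U u -> ~ sim x inf -> maps_root_group u x.
Proof.
  intros Hu Hx. unfold maps_root_group.
  rewrite Ux_alpha, conj_mul, <- alpha_mul, <- Ux_alpha by (try rewrite U_sim_inf; auto).
  reflexivity.
Qed.

Section MuConjugatesU0.
Hypothesis HW : mu_conj_U0.

Lemma U_conj_mu c : unitp c -> pset_eq (pset_conj U (mu_ c)) U_0.
Proof. intro Hc. symmetry. now apply U0_conj_mu_iff. Qed.

(* For a unit [x] both descriptions of [U_x] agree, by [alpha_x = gamma^-1 mu_x gamma']. *)
Lemma Ux_gamma_unit x : unitp x -> pset_eq (pset_conj U_0 (al x)) (pset_conj U (ga (ti x))).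
Proof.
  intros Hx. rewrite (alpha_mu Hx) at 1. rewrite <- !conj_mul.
  rewrite (@conj_normal _ U_0 (pinvp (ga (ti (neg x))))); [now rewrite (HW Hx) | |].
  - apply U0_subgroup.
  - apply U0_inv, gamma_U0, unit_tinv_mneg_nsim_inf, Hx.
Qed.

Lemma Ux_gamma_nsim_z0 x : ~ sim x z0 -> pset_eq (M x) (pset_conj U (ga (ti x))).
Proof.
  intros Hx. destruct (classic (sim x inf)) as [S | S]; [now apply Ux_gamma |].
  rewrite Ux_alpha by exact S. now apply Ux_gamma_unit.
Qed.

Lemma maps_root_group_U0 v x : U_0 v -> ~ sim x z0 -> maps_root_group v x.
Proof.
  intros Hv Hx. unfold maps_root_group.
  assert (Hxv : ~ sim (act x v) z0) by now rewrite U0_sim_z0.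
  assert (Hy : ~ sim (ti x) inf) by now rewrite tinv_sim_inf.
  rewrite !Ux_gamma_nsim_z0, conj_mul by assumption.
  assert (E : ga (ti (act inf (pmul (ga (ti x)) v))) = pmul (ga (ti x)) v).
  { apply gamma_uniq; [apply U0_subgroup; auto using gamma_U0 |].
    now rewrite act_mul, gamma_inf, tinvK. }
  rewrite act_mul, gamma_inf, tinvK in E by exact Hy. now rewrite E.
Qed.

Lemma maps_root_group_mu_sim_inf c x : unitp c -> sim x inf -> maps_root_group (mu_ c) x.
Proof.
  intros Hc S. unfold maps_root_group.
  assert (Hxm : ~ sim (act x (mu_ c)) inf).
  { intro T. apply z0_nsim_inf. rewrite <- (mu_inf Hc).
    apply Htrans with (act x (mu_ c)); [apply (proj1 (mu_in_Sym Hc _ _)); auto | exact T]. }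
  (* [gamma_{x tau^-1}^(mu_c)] lies in [U] and maps [0] to [x mu_c]. *)
  assert (E : al (act x (mu_ c)) = pconj (ga (ti x)) (mu_ c)).
  { rewrite <- (alpha_uniq (u := pconj (ga (ti x)) (mu_ c))).
    - now rewrite act_conj, mu_inv_z0, gamma_inf, tinvK by auto using tinv_nsim_inf.
    - apply (proj1 (HW Hc _)), conj_mem, gamma_U0, tinv_nsim_inf, S. }
  rewrite (Ux_gamma S), (Ux_alpha Hxm), E, <- (U_conj_mu Hc), !conj_mul.
  apply conj_ext; intro w. now rewrite !act_mul, act_conj, act_K.
Qed.

Lemma maps_root_group_mu_nsim_inf c x : unitp c -> ~ sim x inf -> maps_root_group (mu_ c) x.
Proof.
  intros Hc S. unfold maps_root_group.
  assert (Hxm : ~ sim (act x (mu_ c)) z0).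
  { intro T. apply S, (proj2 (mu_in_Sym Hc x inf)). now rewrite mu_inf. }
  (* [alpha_x^(mu_c)] lies in [U_0] and maps [infinity] to [x mu_c]. *)
  assert (E : ga (ti (act x (mu_ c))) = pconj (al x) (mu_ c)).
  { replace (act x (mu_ c)) with (act inf (pconj (al x) (mu_ c)))
      by now rewrite act_conj, mu_inv_inf, alpha_z0.
    apply gamma_uniq.
    - apply (proj1 (U_conj_mu Hc _)), conj_mem, alpha_U, S.
    - now rewrite act_conj, mu_inv_inf, alpha_z0. }
  assert (Hmu2 : pset_eq (pset_conj U (pmul (mu_ c) (mu_ c))) U)
    by now rewrite <- conj_mul, (U_conj_mu Hc), (HW Hc).
  rewrite (Ux_alpha S), (Ux_gamma_nsim_z0 Hxm), E.
  transitivity (pset_conj (pset_conj U (pmul (mu_ c) (mu_ c))) (pconj (al x) (mu_ c))).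
  - rewrite <- (U_conj_mu Hc), !conj_mul.
    apply conj_ext; intro w. now rewrite !act_mul, act_conj, act_K.
  - now rewrite Hmu2.
Qed.

Lemma normalizes_mu c : unitp c -> normalizes_root_groups (mu_ c).
Proof.
  intros Hc x. destruct (classic (sim x inf)).
  - now apply maps_root_group_mu_sim_inf.
  - now apply maps_root_group_mu_nsim_inf.
Qed.

Lemma maps_root_group_alpha_unit c x : unitp c -> sim x inf -> maps_root_group (al c) x.
Proof.
  intros Hc S. pose proof (alpha_mu Hc) as D.
  assert (Hx : ~ sim x z0) by (intro T; apply inf_nsim_z0; eauto).
  assert (Hgb : U_0 (ga (ti c))) by now apply gamma_U0, unit_tinv_nsim_inf.
  rewrite D. apply maps_root_group_mul; [apply maps_root_group_mul |].
  - apply maps_root_group_U0; [apply U0_inv, gamma_U0, unit_tinv_mneg_nsim_inf, Hc | exact Hx].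
  - apply normalizes_mu, Hc.
  - apply maps_root_group_U0; [exact Hgb |]. intro T.
    rewrite <- (U0_sim_z0 _ Hgb), <- !act_mul, <- D in T.
    apply inf_nsim_z0. apply Htrans with (act x (al c)); [| exact T].
    apply Hsym. now rewrite U_sim_inf by now apply alpha_U, Hc.
Qed.

Lemma unit_z0_mul_alpha_inv u t :
  U u -> unitp t -> sim (act z0 u) z0 -> unitp (act z0 (pmul u (pinvp (al t)))).
Proof.
  intros Hu [Ht0 Htinf] S. split.
  - rewrite act_mul, in_Sym_sim_inv by now apply U_in_Sym, alpha_U.
    rewrite alpha_z0 by exact Htinf. intro T. apply Ht0. eauto.
  - rewrite U_sim_inf; [exact C2a |]. apply HU; [exact Hu | apply HU, alpha_U, Htinf].
Qed.

Hypothesis H3 : three_classes sim.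

Lemma normalizes_U u : U u -> normalizes_root_groups u.
Proof.
  intros Hu x. destruct (classic (sim x inf)) as [S | S]; [| now apply maps_root_group_U].
  assert (Hc : ~ sim (act z0 u) inf) by now rewrite U_sim_inf.
  destruct (classic (sim (act z0 u) z0)) as [T | T].
  - destruct (unit_exists H3) as [t Ht].
    assert (Hut : U (pmul u (pinvp (al t)))) by (apply HU; [exact Hu | apply HU, alpha_U, Ht]).
    replace u with (pmul (pmul u (pinvp (al t))) (al t))
      by (apply perm_ext; intro w; now rewrite !act_mul, act_KV).
    rewrite <- (alpha_uniq Hut).
    apply maps_root_group_mul; apply maps_root_group_alpha_unit; auto using unit_z0_mul_alpha_inv.
    rewrite (alpha_uniq Hut), U_sim_inf by exact Hut. exact S.
  - rewrite <- (alpha_uniq Hu). apply maps_root_group_alpha_unit; [split |]; auto.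
Qed.

(* Conjugating by [mu_t^-1] moves [U_0] into [U], for any unit [t]. *)
Lemma normalizes_U0 v : U_0 v -> normalizes_root_groups v.
Proof.
  intros Hv. destruct (unit_exists H3) as [t Ht]. pose proof (U_conj_mu Ht) as HUm.
  set (m := mu_ t) in *.
  replace v with (pconj (pconj v (pinvp m)) m)
    by (apply perm_ext; intro w; now rewrite !act_conj, !act_K, act_KV).
  apply normalizes_root_groups_conj; [| now apply normalizes_mu].
  apply normalizes_U. apply (conj_moveR U U_0 m) in HUm. apply HUm, conj_mem, Hv.
Qed.

Lemma LM2_Ux : LM2 M.
Proof.
  intros x g Hg. revert x. change (normalizes_root_groups g).
  induction Hg as [y g Hy | | g h _ IHg _ IHh | g _ IHg].
  - destruct (classic (sim y inf)) as [S | S].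
    + apply Ux_gamma in Hy; [| exact S]. destruct Hy as [a [Ha ->]].
      apply normalizes_root_groups_conj; [now apply normalizes_U |].
      apply normalizes_U0, gamma_U0, tinv_nsim_inf, S.
    + apply Ux_alpha in Hy; [| exact S]. destruct Hy as [a [Ha ->]].
      apply normalizes_root_groups_conj; [now apply normalizes_U0 |].
      apply normalizes_U, alpha_U, S.
  - intro x. unfold maps_root_group. now rewrite conj_pid.
  - now apply normalizes_root_groups_mul.
  - now apply normalizes_root_groups_inv.
Qed.

End MuConjugatesU0.

Lemma mu_in_gen c : unitp c -> gen M (mu_ c).
Proof.
  intros Hc. unfold mu. apply gen_mul; [apply gen_mul |].
  - apply (@gen_in _ M z0). apply Ux_zero, gamma_U0, unit_tinv_mneg_nsim_inf, Hc.
  - apply (@gen_in _ M inf). apply Ux_inf, alpha_U, Hc.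
  - apply (@gen_in _ M z0). apply Ux_zero, gamma_U0, unit_mneg_tinv_nsim_inf, Hc.
Qed.

Lemma LM2_U0_conj_mu : LM2 M -> forall c, unitp c -> pset_eq U_0 (pset_conj U (mu_ c)).
Proof.
  intros L2 c Hc. pose proof (L2 inf _ (mu_in_gen Hc)) as E.
  rewrite mu_inf, Ux_inf, Ux_zero in E by exact Hc. now symmetry.
Qed.

End Construction.

Theorem mainTheorem7 (X : Type) (sim : X -> X -> Prop) (U : pset X)
  (tau : perm X) (inf : X)
  (Hrefl : forall x, sim x x)
  (Hsym : forall x y, sim x y -> sim y x)
  (Htrans : forall x y z, sim x y -> sim y z -> sim x z)
  (H3 : three_classes sim)
  (HU : subgroup_Sym sim U)
  (Htau : in_Sym sim tau)
  (C1 : fix_sharp sim U inf)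
  (C1' : fix_sharp_bar sim U inf)
  (C2a : ~ sim (act inf tau) inf)
  (C2b : act (act inf tau) tau = inf) :
  let M := Ux sim U tau inf in
  (LM0 sim M /\ LM1 sim M /\ LM1' sim M) /\
  ((local_moufang sim M <->
      (forall x, is_unit sim tau inf x ->
         pset_eq (pset_conj U (hh U tau inf x)) U)) /\
   ((forall x, is_unit sim tau inf x ->
         pset_eq (pset_conj U (hh U tau inf x)) U) <->
    (forall x, is_unit sim tau inf x ->
         pset_eq (U0 U tau) (pset_conj U (mu U tau inf x))))).
Proof.
  intro M.
  rewrite hh_normalizes_all_iff, <- U0_conj_mu_iff by assumption.
  split; [now split; [| split]; [apply LM0_Ux | apply LM1_Ux | apply LM1'_Ux] |].
  split; [| reflexivity]. split.
  - intros (_ & _ & _ & _ & _ & L2). now apply LM2_U0_conj_mu.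
  - intro H. apply U0_conj_mu_iff in H; try assumption.
    split; [exact H3 |]. split; [intro x; now apply Ux_subgroup |].
    split; [now apply LM0_Ux |]. split; [now apply LM1_Ux |]. split; [now apply LM1'_Ux |].
    now apply LM2_Ux.
Qed.
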